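(* Let $0<p<\infty$ and $\alpha>-1$. Suppose $w\in A^p_\beta$ for some $\beta$ with $-1<\beta<\alpha$, and suppose $\varphi$ is an entire function which is of order less than one, or of order one and type zero. Then the weighted superposition operator $S_{\varphi,w}$ is a bounded operator from the Bloch space $\mathcal B$ into $A^p_\alpha$, i.e. it maps $\mathcal B$ into $A^p_\alpha$ and for every $K>0$ there is a constant $C_K$ such that $\int_{\mathbb D}(1-|z|^2)^\alpha|w(z)|^p|\varphi(f(z))|^p\,dA(z)\le C_K$ for all $f\in\mathcal B$ with $\|f\|_{\mathcal B}\le K$.
   Context: $\mathbb D$ is the unit disc, $\mathcal H(\mathbb D)$ the analytic functions on it. For $\varphi$ entire and $w\in\mathcal H(\mathbb D)$, $S_{\varphi,w}(f)(z)=w(z)\varphi(f(z))$. For $0<p<\infty$, $\gamma>-1$, $A^p_\gamma$ is the set of $f\in\mathcal H(\mathbb D)$ with $\int_{\mathbb D}(1-|z|^2)^\gamma|f(z)|^p\,dA(z)<\infty$, $dA$ normalized area measure. The Bloch space $\mathcal B$ consists of $f\in\mathcal H(\mathbb D)$ with $\|f\|_{\mathcal B}=|f(0)|+\sup_{z\in\mathbb D}(1-|z|^2)|f'(z)|<\infty$. Since the operator is nonlinear, ''bounded'' means it maps bounded sets to bounded sets. *)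

From Stdlib Require Import Reals Lra Classical ClassicalEpsilon.
Open Scope R_scope.

Definition Cplx : Type := (R * R)%type.
Definition Cadd (z w : Cplx) : Cplx := (fst z + fst w, snd z + snd w).
Definition Csub (z w : Cplx) : Cplx := (fst z - fst w, snd z - snd w).
Definition Cmul (z w : Cplx) : Cplx :=
  (fst z * fst w - snd z * snd w, fst z * snd w + snd z * fst w).
Definition C0 : Cplx := (0, 0).
Definition Cnorm (z : Cplx) : R := sqrt (fst z * fst z + snd z * snd z).

Definition inD (z : Cplx) : Prop := Cnorm z < 1.

Definition is_cderiv_on (U : Cplx -> Prop) (f : Cplx -> Cplx) (z l : Cplx) : Prop :=
  forall eps, 0 < eps -> exists delta, 0 < delta /\
    forall h, h <> C0 -> Cnorm h < delta -> U (Cadd z h) ->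
      Cnorm (Csub (Csub (f (Cadd z h)) (f z)) (Cmul l h)) <= eps * Cnorm h.

(* f in H(D): complex differentiable at every point of D (values outside D irrelevant) *)
Definition analytic_D (f : Cplx -> Cplx) : Prop :=
  forall z, inD z -> exists l, is_cderiv_on inD f z l.

Definition entire (phi : Cplx -> Cplx) : Prop :=
  forall z, exists l, is_cderiv_on (fun _ => True) phi z l.

(* x^y for x >= 0 with the convention 0^y = 0 (y > 0 in all uses) *)
Definition rpow (x y : R) : R :=
  if Rlt_dec 0 x then Rpower x y else 0.

(* Riemann integral on [a,b], 0 if f is not Riemann integrable there
   (RiemannInt does not depend on the integrability proof) *)
Definition RInt (f : R -> R) (a b : R) : R :=
  match excluded_middle_informative (inhabited (Riemann_integrable f a b)) with
  | left H => RiemannInt (epsilon H (fun _ => True))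
  | right _ => 0
  end.

(* Integral of F over the disc of radius rho with respect to the normalized
   area measure dA = dx dy / pi, computed in polar coordinates. *)
Definition disc_int (F : Cplx -> R) (rho : R) : R :=
  / PI * RInt (fun r => r * RInt (fun t => F (r * cos t, r * sin t)) 0 (2 * PI)) 0 rho.

Definition bergman_integrand (p gamma : R) (g : Cplx -> Cplx) (z : Cplx) : R :=
  rpow (1 - Cnorm z ^ 2) gamma * rpow (Cnorm (g z)) p.

(* int_D (1-|z|^2)^gamma |g|^p dA <= M  (nonnegative integrand: limit of the
   integrals over discs of radius rho -> 1, i.e. their supremum) *)
Definition bergman_int_le (p gamma : R) (g : Cplx -> Cplx) (M : R) : Prop :=
  forall rho, 0 <= rho < 1 -> disc_int (bergman_integrand p gamma g) rho <= M.

Definition in_Apg (p gamma : R) (g : Cplx -> Cplx) : Prop :=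
  analytic_D g /\ exists M, bergman_int_le p gamma g M.

Definition bloch_norm_le (f : Cplx -> Cplx) (K : R) : Prop :=
  analytic_D f /\
  forall z l, inD z -> is_cderiv_on inD f z l ->
    Cnorm (f C0) + (1 - Cnorm z ^ 2) * Cnorm l <= K.

Definition in_Bloch (f : Cplx -> Cplx) : Prop := exists K, bloch_norm_le f K.

Definition growth_bound_pow (phi : Cplx -> Cplx) (mu : R) : Prop :=
  exists R0, 0 < R0 /\ forall z, R0 <= Cnorm z -> Cnorm (phi z) <= exp (Rpower (Cnorm z) mu).

(* order rho = inf { mu >= 0 | M(r) <= exp(r^mu) eventually } *)
Definition order_lt_one (phi : Cplx -> Cplx) : Prop :=
  exists mu, 0 <= mu < 1 /\ growth_bound_pow phi mu.

Definition order_eq_one (phi : Cplx -> Cplx) : Prop :=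
  (forall mu, 1 < mu -> growth_bound_pow phi mu) /\ ~ order_lt_one phi.

(* type (for order 1) = limsup_{r->oo} log M(r) / r ; type zero means
   for every sigma > 0, M(r) <= exp(sigma r) eventually *)
Definition type_zero_order_one (phi : Cplx -> Cplx) : Prop :=
  forall sigma, 0 < sigma -> exists R0, 0 < R0 /\
    forall z, R0 <= Cnorm z -> Cnorm (phi z) <= exp (sigma * Cnorm z).

Definition S_op (phi w f : Cplx -> Cplx) : Cplx -> Cplx := fun z => Cmul (w z) (phi (f z)).

From Stdlib Require Import Reals Lra Psatz Classical ClassicalEpsilon.
Open Scope R_scope.

(* A Bloch function with ||f||_B <= K grows at most logarithmically:
   |f(z)| <= K + (K/2) log((1+|z|)/(1-|z|)) <= K (1 + log 2) - (K/2) log(1-|z|^2).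
   The hypothesis on phi gives, for every sigma > 0, |phi(u)| <= B + exp(sigma |u|).
   Hence |phi(f(z))| <= A (1-|z|^2)^(-sigma K/2), and with sigma = (alpha-beta)/(pK)
   the A^p_alpha integrand of S_{phi,w}(f) is at most A^p times the A^p_beta
   integrand of w, uniformly in f.  Integrating over the discs of radius rho < 1
   gives the uniform bound; analyticity of w phi(f) is the product and chain rules. *)

Ltac cplx_ring :=
  repeat match goal with z : Cplx |- _ => destruct z end;
  unfold Cadd, Csub, Cmul, C0; simpl; f_equal; ring.

Lemma Cnorm_ge0 z : 0 <= Cnorm z.
Proof. apply sqrt_pos. Qed.

Lemma Cnorm_sq z : Cnorm z * Cnorm z = fst z * fst z + snd z * snd z.
Proof. unfold Cnorm; rewrite sqrt_sqrt; nra. Qed.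

Lemma le_of_sq_le x y : 0 <= y -> x * x <= y * y -> x <= y.
Proof. intros; nra. Qed.

Lemma Rabs_sq x : Rabs x * Rabs x = x * x.
Proof. rewrite <- Rabs_mult; apply Rabs_right; nra. Qed.

Lemma Cnorm_C0 : Cnorm C0 = 0.
Proof. unfold Cnorm, C0; simpl. replace (0 * 0 + 0 * 0) with 0 by ring. apply sqrt_0. Qed.

Lemma Cnorm_eq0 z : Cnorm z = 0 -> z = C0.
Proof.
  intro H. pose proof (Cnorm_sq z) as Hsq. rewrite H in Hsq.
  destruct z as [a b]; simpl in *; unfold C0; f_equal; nra.
Qed.

Definition rdot (v u : Cplx) : R := fst v * fst u + snd v * snd u.

Lemma dot_abs_le (v u : Cplx) : Rabs (rdot v u) <= Cnorm v * Cnorm u.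
Proof.
  pose proof (Cnorm_ge0 v); pose proof (Cnorm_ge0 u). unfold rdot.
  apply le_of_sq_le; [nra|]. rewrite Rabs_sq.
  replace (Cnorm v * Cnorm u * (Cnorm v * Cnorm u))
    with ((Cnorm v * Cnorm v) * (Cnorm u * Cnorm u)) by ring.
  rewrite !Cnorm_sq. pose proof (Rle_0_sqr (fst v * snd u - snd v * fst u)); unfold Rsqr in *; nra.
Qed.

Lemma Cnorm_mul a b : Cnorm (Cmul a b) = Cnorm a * Cnorm b.
Proof. unfold Cnorm, Cmul; simpl. rewrite <- sqrt_mult by nra. f_equal. ring. Qed.

Lemma Cnorm_add a b : Cnorm (Cadd a b) <= Cnorm a + Cnorm b.
Proof.
  pose proof (Cnorm_ge0 a); pose proof (Cnorm_ge0 b).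
  pose proof (Rle_abs (rdot a b)); pose proof (dot_abs_le a b). unfold rdot in *.
  apply le_of_sq_le; [lra|]. rewrite Cnorm_sq.
  replace ((Cnorm a + Cnorm b) * (Cnorm a + Cnorm b))
    with (Cnorm a * Cnorm a + Cnorm b * Cnorm b + 2 * (Cnorm a * Cnorm b)) by ring.
  rewrite !Cnorm_sq. unfold Cadd; simpl. nra.
Qed.

Lemma Cnorm_rev_tri a b : Rabs (Cnorm a - Cnorm b) <= Cnorm (Csub a b).
Proof.
  assert (Cnorm a <= Cnorm (Csub a b) + Cnorm b).
  { replace a with (Cadd (Csub a b) b) at 1 by cplx_ring. apply Cnorm_add. }
  assert (Cnorm b <= Cnorm (Csub a b) + Cnorm a).
  { replace (Cnorm (Csub a b)) with (Cnorm (Csub b a)) by (unfold Cnorm, Csub; simpl; f_equal; ring).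
    replace b with (Cadd (Csub b a) a) at 1 by cplx_ring. apply Cnorm_add. }
  apply Rabs_le; lra.
Qed.

Lemma Cnorm_le_sum z : Cnorm z <= Rabs (fst z) + Rabs (snd z).
Proof.
  pose proof (Rabs_pos (fst z)); pose proof (Rabs_pos (snd z)).
  apply le_of_sq_le; [lra|]. rewrite Cnorm_sq.
  rewrite <- (Rabs_sq (fst z)), <- (Rabs_sq (snd z)). nra.
Qed.

Lemma Rabs_fst_le z : Rabs (fst z) <= Cnorm z.
Proof.
  apply le_of_sq_le; [apply Cnorm_ge0|]. rewrite Cnorm_sq, Rabs_sq. nra.
Qed.

Lemma Rabs_snd_le z : Rabs (snd z) <= Cnorm z.
Proof.
  apply le_of_sq_le; [apply Cnorm_ge0|]. rewrite Cnorm_sq, Rabs_sq. nra.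
Qed.

Lemma Cnorm_scal s z : Cnorm (s * fst z, s * snd z) = Rabs s * Cnorm z.
Proof.
  unfold Cnorm; simpl.
  replace (s * fst z * (s * fst z) + s * snd z * (s * snd z))
    with (Rsqr s * (fst z * fst z + snd z * snd z)) by (unfold Rsqr; ring).
  rewrite sqrt_mult, sqrt_Rsqr_abs; [auto | apply Rle_0_sqr | nra].
Qed.

Lemma Cnorm_polar r t : Cnorm (r * cos t, r * sin t) = Rabs r.
Proof.
  unfold Cnorm; simpl.
  replace (r * cos t * (r * cos t) + r * sin t * (r * sin t))
    with (r * r * (Rsqr (sin t) + Rsqr (cos t))) by (unfold Rsqr; ring).
  rewrite sin2_cos2, Rmult_1_r. apply sqrt_Rsqr_abs.
Qed.

Lemma Cadd_Csub z u : Cadd z (Csub u z) = u.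
Proof. cplx_ring. Qed.

Lemma Csub_self z : Csub z z = C0.
Proof. cplx_ring. Qed.

Lemma small_factor c eps : 0 <= c -> 0 < eps -> exists e, 0 < e /\ e <= 1 /\ c * e <= eps.
Proof.
  intros Hc He. exists (Rmin 1 (eps / (c + 1))).
  assert (Hq : 0 < eps / (c + 1)) by (apply Rdiv_lt_0_compat; lra).
  repeat split; [apply Rmin_pos; lra | apply Rmin_l |].
  apply Rle_trans with (c * (eps / (c + 1))).
  - apply Rmult_le_compat_l; [lra | apply Rmin_r].
  - apply (Rmult_le_reg_r (c + 1)); [lra|].
    replace (c * (eps / (c + 1)) * (c + 1)) with (c * eps) by (field; lra). nra.
Qed.

Lemma cderiv_remainder U g z l : is_cderiv_on U g z l ->
  forall e, 0 < e -> exists d, 0 < d /\ forall h, Cnorm h < d -> U (Cadd z h) ->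
    Cnorm (Csub (Csub (g (Cadd z h)) (g z)) (Cmul l h)) <= e * Cnorm h.
Proof.
  intros Hd e He. destruct (Hd e He) as [d [Hd0 Hrem]]. exists d; split; auto.
  intros h Hh Uh. destruct (classic (h = C0)) as [->|Hh0]; auto.
  replace (Cadd z C0) with z by cplx_ring.
  replace (Csub (Csub (g z) (g z)) (Cmul l C0)) with C0 by (destruct (g z); cplx_ring).
  rewrite Cnorm_C0; lra.
Qed.

Lemma cderiv_local U g z l : is_cderiv_on U g z l ->
  forall e, 0 < e -> exists d, 0 < d /\ forall h, Cnorm h < d -> U (Cadd z h) ->
    Cnorm (Csub (Csub (g (Cadd z h)) (g z)) (Cmul l h)) <= e * Cnorm h /\
    Cnorm (Csub (g (Cadd z h)) (g z)) <= (Cnorm l + 1) * Cnorm h.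
Proof.
  intros Hd e He.
  destruct (cderiv_remainder _ _ _ _ Hd e He) as [d1 [Hd1 Hrem]].
  destruct (cderiv_remainder _ _ _ _ Hd 1 Rlt_0_1) as [d2 [Hd2 Hrem1]].
  exists (Rmin d1 d2); split; [apply Rmin_pos; auto|]. intros h Hh Uh.
  pose proof (Rmin_l d1 d2); pose proof (Rmin_r d1 d2).
  split; [apply Hrem; auto; lra|].
  replace (Csub (g (Cadd z h)) (g z))
    with (Cadd (Cmul l h) (Csub (Csub (g (Cadd z h)) (g z)) (Cmul l h)))
    by (destruct (g (Cadd z h)), (g z); cplx_ring).
  eapply Rle_trans; [apply Cnorm_add|]. rewrite Cnorm_mul.
  specialize (Hrem1 h ltac:(lra) Uh). lra.
Qed.

Lemma cderiv_continuous U g z l : is_cderiv_on U g z l ->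
  forall eps, 0 < eps -> exists delta, 0 < delta /\
    forall u, U u -> Cnorm (Csub u z) < delta -> Cnorm (Csub (g u) (g z)) < eps.
Proof.
  intros Hd eps He. destruct (cderiv_local _ _ _ _ Hd 1 Rlt_0_1) as [d [Hd0 Hinc]].
  destruct (small_factor (Cnorm l + 1) (eps / 2)) as [k [Hk [_ Hlk]]];
    [pose proof (Cnorm_ge0 l); lra | lra |].
  exists (Rmin d k); split; [apply Rmin_pos; auto|].
  intros u Uu Hu. rewrite <- (Cadd_Csub z u) in Uu |- * at 1.
  assert (Hud : Cnorm (Csub u z) < d) by (eapply Rlt_le_trans; [exact Hu | apply Rmin_l]).
  destruct (Hinc _ Hud Uu) as [_ Hi].
  eapply Rle_lt_trans; [exact Hi|].
  assert (Cnorm (Csub u z) < k) by (eapply Rlt_le_trans; [exact Hu | apply Rmin_r]).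
  pose proof (Cnorm_ge0 l). nra.
Qed.

Lemma chain_rule U f g z l1 l2 :
  is_cderiv_on U f z l1 -> is_cderiv_on (fun _ => True) g (f z) l2 ->
  is_cderiv_on U (fun u => g (f u)) z (Cmul l2 l1).
Proof.
  intros Hf Hg eps He.
  pose proof (Cnorm_ge0 l1) as N1; pose proof (Cnorm_ge0 l2) as N2.
  destruct (small_factor (Cnorm l1 + 1) (eps / 2)) as [e2 [He2 [_ Hle2]]]; [lra|lra|].
  destruct (small_factor (Cnorm l2) (eps / 2)) as [e1 [He1 [_ Hle1]]]; [lra|lra|].
  destruct (cderiv_remainder _ _ _ _ Hg e2 He2) as [d2 [Hd2 Hrg]].
  destruct (cderiv_local _ _ _ _ Hf e1 He1) as [d1 [Hd1 Hlf]].
  destruct (small_factor (Cnorm l1 + 1) d2) as [k [Hk [_ Hlk]]]; [lra|lra|].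
  exists (Rmin d1 k); split; [apply Rmin_pos; auto|].
  intros h _ Hh Uh.
  pose proof (Rmin_l d1 k); pose proof (Rmin_r d1 k). pose proof (Cnorm_ge0 h) as Nh.
  destruct (Hlf h ltac:(lra) Uh) as [Hf2 HXY].
  set (X := f (Cadd z h)) in *; set (Y := f z) in *.
  (* the increment X - Y of f is below d2, so the remainder estimate for g applies to it *)
  assert (Hg2 : Cnorm (Csub (Csub (g X) (g Y)) (Cmul l2 (Csub X Y))) <= e2 * Cnorm (Csub X Y)).
  { pose proof (Hrg (Csub X Y) ltac:(nra) I) as Hr. rewrite Cadd_Csub in Hr. exact Hr. }
  replace (Csub (Csub (g X) (g Y)) (Cmul (Cmul l2 l1) h))
    with (Cadd (Csub (Csub (g X) (g Y)) (Cmul l2 (Csub X Y)))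
               (Cmul l2 (Csub (Csub X Y) (Cmul l1 h))))
    by (destruct (g X), (g Y); cplx_ring).
  eapply Rle_trans; [apply Cnorm_add|]. rewrite Cnorm_mul.
  assert (e2 * Cnorm (Csub X Y) <= eps / 2 * Cnorm h).
  { apply Rle_trans with (e2 * ((Cnorm l1 + 1) * Cnorm h)); [apply Rmult_le_compat_l; lra | nra]. }
  assert (Cnorm l2 * Cnorm (Csub (Csub X Y) (Cmul l1 h)) <= eps / 2 * Cnorm h).
  { apply Rle_trans with (Cnorm l2 * (e1 * Cnorm h)); [apply Rmult_le_compat_l; lra | nra]. }
  lra.
Qed.

Lemma product_rule U a b z la lb :
  is_cderiv_on U a z la -> is_cderiv_on U b z lb ->
  is_cderiv_on U (fun u => Cmul (a u) (b u)) z (Cadd (Cmul (a z) lb) (Cmul la (b z))).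
Proof.
  intros Ha Hb eps He.
  pose proof (Cnorm_ge0 (a z)); pose proof (Cnorm_ge0 (b z)).
  set (ca := Cnorm la + 1); set (cb := Cnorm lb + 1).
  assert (0 < ca) by (unfold ca; pose proof (Cnorm_ge0 la); lra).
  assert (0 < cb) by (unfold cb; pose proof (Cnorm_ge0 lb); lra).
  destruct (small_factor (Cnorm (a z) + Cnorm (b z)) (eps / 2)) as [e [He0 [_ Hle]]]; [lra|lra|].
  destruct (small_factor (ca * cb) (eps / 2)) as [k [Hk [_ Hlk]]]; [nra|lra|].
  destruct (cderiv_local _ _ _ _ Ha e He0) as [da [Hda Hla]].
  destruct (cderiv_local _ _ _ _ Hb e He0) as [db [Hdb Hlb]].
  exists (Rmin (Rmin da db) k); split; [repeat apply Rmin_pos; auto|].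
  intros h _ Hh Uh.
  pose proof (Rmin_l da db); pose proof (Rmin_r da db);
    pose proof (Rmin_l (Rmin da db) k); pose proof (Rmin_r (Rmin da db) k).
  pose proof (Cnorm_ge0 h) as Nh.
  destruct (Hla h ltac:(lra) Uh) as [Ea Ia]; destruct (Hlb h ltac:(lra) Uh) as [Eb Ib].
  set (A := a (Cadd z h)) in *; set (B := b (Cadd z h)) in *.
  (* expand A B - a b into the two linear remainders plus the quadratic term *)
  replace (Csub (Csub (Cmul A B) (Cmul (a z) (b z))) (Cmul (Cadd (Cmul (a z) lb) (Cmul la (b z))) h))
    with (Cadd (Cadd (Cmul (a z) (Csub (Csub B (b z)) (Cmul lb h)))
                     (Cmul (Csub (Csub A (a z)) (Cmul la h)) (b z)))
               (Cmul (Csub A (a z)) (Csub B (b z))))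
    by (destruct A, B, (a z), (b z); cplx_ring).
  eapply Rle_trans; [apply Cnorm_add|]. eapply Rle_trans; [apply Rplus_le_compat_r, Cnorm_add|].
  rewrite !Cnorm_mul.
  pose proof (Cnorm_ge0 (Csub A (a z))); pose proof (Cnorm_ge0 (Csub B (b z))).
  assert (Cnorm (a z) * Cnorm (Csub (Csub B (b z)) (Cmul lb h)) <= Cnorm (a z) * (e * Cnorm h))
    by (apply Rmult_le_compat_l; auto).
  assert (Cnorm (Csub (Csub A (a z)) (Cmul la h)) * Cnorm (b z) <= e * Cnorm h * Cnorm (b z))
    by (apply Rmult_le_compat_r; auto).
  assert (Cnorm (Csub A (a z)) * Cnorm (Csub B (b z)) <= ca * Cnorm h * (cb * Cnorm h))
    by (apply Rmult_le_compat; auto).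
  assert (ca * cb * Cnorm h <= eps / 2) by nra.
  nra.
Qed.

(* Proof: look at the supremum of the points reached. *)
Lemma continuous_induction (P : R -> Prop) c d : c <= d -> P c ->
  (forall m, c <= m <= d -> exists eta, 0 < eta /\
     forall s, c <= s -> m - eta < s -> P s -> P (Rmin (m + eta) d)) -> P d.
Proof.
  intros Hcd Pc Hstep.
  set (E := fun s => c <= s <= d /\ P s).
  assert (Hb : bound E) by (exists d; intros x [[? ?] ?]; auto).
  destruct (completeness E Hb (ex_intro _ c (conj (conj (Rle_refl c) Hcd) Pc))) as [m [Hub Hlub]].
  assert (Hcm : c <= m) by (apply Hub; split; [lra|auto]).
  assert (Hmd : m <= d) by (apply Hlub; intros x [[? ?] ?]; auto).
  destruct (Hstep m (conj Hcm Hmd)) as [eta [Heta Hs]].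
  assert (Hex : exists s, E s /\ m - eta < s).
  { apply NNPP; intro Hn.
    assert (m <= m - eta); [|lra].
    apply Hlub. intros x Ex. apply Rnot_lt_le. intro Hl. apply Hn. exists x; auto. }
  destruct Hex as [s [[[Hs1 Hs2] Ps] Hs3]].
  specialize (Hs s Hs1 Hs3 Ps).
  assert (Hmin : Rmin (m + eta) d <= m) by (apply Hub; split; auto; split; [apply Rmin_glb|apply Rmin_r]; lra).
  unfold Rmin in *. destruct (Rle_dec (m + eta) d); [lra|auto].
Qed.

Definition jcont (G : R -> R -> R) (r0 t0 : R) : Prop :=
  forall eps, 0 < eps -> exists delta, 0 < delta /\
    forall r t, Rabs (r - r0) < delta -> Rabs (t - t0) < delta -> Rabs (G r t - G r0 t0) < eps.

Lemma tube G r0 c d : c <= d -> (forall t, c <= t <= d -> jcont G r0 t) ->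
  forall eps, 0 < eps -> exists delta, 0 < delta /\
    forall r, Rabs (r - r0) < delta -> forall t, c <= t <= d -> Rabs (G r t - G r0 t) < eps.
Proof.
  intros Hcd Hj eps He.
  apply (continuous_induction (fun s => exists delta, 0 < delta /\
    forall r, Rabs (r - r0) < delta -> forall t, c <= t <= s -> Rabs (G r t - G r0 t) < eps) c d Hcd).
  - destruct (Hj c (conj (Rle_refl c) Hcd) eps He) as [dl [Hdl H]].
    exists dl; split; auto. intros r Hr t Ht. replace t with c by lra.
    apply H; auto. rewrite Rminus_diag, Rabs_R0; auto.
  - intros m Hm. destruct (Hj m Hm (eps / 2)) as [d1 [Hd1 H1]]; [lra|].
    exists (d1 / 2); split; [lra|].
    intros s _ Hs2 [ds [Hds Hs]].
    exists (Rmin ds d1); split; [apply Rmin_pos; auto|].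
    intros r Hr t Ht.
    destruct (Rle_dec t s) as [Hts|Hts].
    + apply Hs; [eapply Rlt_le_trans; [exact Hr|apply Rmin_l] | lra].
    + assert (Htm : Rabs (t - m) < d1).
      { assert (t <= m + d1 / 2) by (eapply Rle_trans; [apply Ht|apply Rmin_l]). apply Rabs_def1; lra. }
      assert (Hr1 : Rabs (r - r0) < d1) by (eapply Rlt_le_trans; [exact Hr|apply Rmin_r]).
      assert (Hr0 : Rabs (r0 - r0) < d1) by (rewrite Rminus_diag, Rabs_R0; auto).
      pose proof (H1 r t Hr1 Htm); pose proof (H1 r0 t Hr0 Htm).
      replace (G r t - G r0 t) with ((G r t - G r0 m) - (G r0 t - G r0 m)) by ring.
      eapply Rle_lt_trans; [apply Rabs_triang|]. rewrite Rabs_Ropp. lra.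
Qed.

Lemma jcont_section G x t : jcont G x t -> continuity_pt (fun s => G x s) t.
Proof.
  intros Hj eps He. destruct (Hj eps He) as [dl [Hdl H]].
  exists dl; split; auto. intros y [_ Hy]. unfold R_dist in *; simpl in *.
  apply H; auto. rewrite Rminus_diag, Rabs_R0; auto.
Qed.

Lemma rectangle_bound G a b c d : a <= b -> c <= d ->
  (forall x t, a <= x <= b -> c <= t <= d -> jcont G x t) ->
  exists B, forall x t, a <= x <= b -> c <= t <= d -> Rabs (G x t) <= B.
Proof.
  intros Hab Hcd Hj.
  assert (Hline : forall x, a <= x <= b -> exists B, forall t, c <= t <= d -> Rabs (G x t) <= B).
  { intros x Hx.
    destruct (continuity_ab_maj (fun t => Rabs (G x t)) c d Hcd) as [M [HM _]].
    - intros t Ht. apply (continuity_pt_comp (fun s => G x s) Rabs).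
      + apply jcont_section; auto.
      + apply Rcontinuity_abs.
    - exists (Rabs (G x M)); auto. }
  apply (continuous_induction
    (fun s => exists B, forall x t, a <= x <= s -> c <= t <= d -> Rabs (G x t) <= B) a b Hab).
  - destruct (Hline a (conj (Rle_refl a) Hab)) as [B HB].
    exists B. intros x t Hx Ht. replace x with a by lra. auto.
  - intros m Hm. destruct (tube G m c d Hcd (fun t Ht => Hj m t Hm Ht) 1 Rlt_0_1) as [dl [Hdl Ht]].
    destruct (Hline m Hm) as [B1 HB1].
    exists (dl / 2); split; [lra|].
    intros s _ Hs2 [Bs HBs].
    exists (Rmax Bs (B1 + 1)). intros x t Hx Ht'.
    destruct (Rle_dec x s).
    + eapply Rle_trans; [apply HBs; auto; lra | apply Rmax_l].
    + eapply Rle_trans; [|apply Rmax_r].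
      assert (Rabs (x - m) < dl).
      { assert (x <= m + dl / 2) by (eapply Rle_trans; [apply Hx|apply Rmin_l]). apply Rabs_def1; lra. }
      specialize (Ht x H t Ht'). specialize (HB1 t Ht').
      replace (G x t) with ((G x t - G m t) + G m t) by ring.
      eapply Rle_trans; [apply Rabs_triang|]. lra.
Qed.

Lemma Rabs_le_le x a : Rabs x <= a -> - a <= x /\ x <= a.
Proof. unfold Rabs; destruct (Rcase_abs x); lra. Qed.

Lemma entire_bounded_on_disc phi R0 : entire phi -> 0 <= R0 ->
  exists B, forall u, Cnorm u <= R0 -> Cnorm (phi u) <= B.
Proof.
  intros He HR0.
  destruct (rectangle_bound (fun x t => Cnorm (phi (x, t))) (- R0) R0 (- R0) R0) as [B HB]; try lra.
  - intros x0 t0 _ _ eps Heps.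
    destruct (He (x0, t0)) as [l Hl].
    destruct (cderiv_continuous _ _ _ _ Hl eps Heps) as [d [Hd H]].
    exists (d / 2); split; [lra|]. intros r t Hr Ht.
    eapply Rle_lt_trans; [apply Cnorm_rev_tri|]. apply H; auto.
    eapply Rle_lt_trans; [apply Cnorm_le_sum|]. unfold Csub; simpl. lra.
  - exists B. intros [x t] Hu.
    pose proof (Rabs_fst_le (x, t)); pose proof (Rabs_snd_le (x, t)). simpl in *.
    specialize (HB x t). rewrite Rabs_right in HB by (apply Rle_ge, Cnorm_ge0).
    pose proof (Rabs_le_le x R0 ltac:(lra)); pose proof (Rabs_le_le t R0 ltac:(lra)).
    apply HB; lra.
Qed.

Lemma exp_le x y : x <= y -> exp x <= exp y.
Proof. intros [H|H]; [left; apply exp_increasing; auto | subst; lra]. Qed.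

Lemma ln_le x y : 0 < x -> x <= y -> ln x <= ln y.
Proof. intros Hx [H|H]; [left; apply ln_increasing; auto | subst; lra]. Qed.

(* Order < 1 implies type zero: r^mu <= sigma * r once r >= sigma^(1/(mu-1)). *)
Lemma order_lt_one_type_zero phi : order_lt_one phi -> type_zero_order_one phi.
Proof.
  intros [mu [Hmu [R0 [HR0 Hg]]]] sigma Hs.
  exists (Rmax R0 (exp (ln sigma / (mu - 1)))). split; [eapply Rlt_le_trans; [exact HR0 | apply Rmax_l]|].
  intros z Hz. pose proof (Rmax_l R0 (exp (ln sigma / (mu - 1)))) as HmR0.
  pose proof (Rmax_r R0 (exp (ln sigma / (mu - 1)))) as Hmexp.
  eapply Rle_trans; [apply Hg; lra|]. apply exp_le.
  set (x := Cnorm z) in *.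
  assert (Hx : 0 < x) by lra.
  assert (Hl : ln sigma / (mu - 1) <= ln x).
  { rewrite <- (ln_exp (ln sigma / (mu - 1))). apply ln_le; [apply exp_pos | lra]. }
  unfold Rpower. rewrite <- (exp_ln x) at 2 by auto. rewrite <- (exp_ln sigma) at 1 by auto.
  rewrite <- exp_plus. apply exp_le.
  apply (Rmult_le_compat_l (1 - mu)) in Hl; [|lra].
  replace ((1 - mu) * (ln sigma / (mu - 1))) with (- ln sigma) in Hl by (field; lra).
  lra.
Qed.

Lemma entire_exp_type_bound phi : entire phi ->
  (order_lt_one phi \/ (order_eq_one phi /\ type_zero_order_one phi)) ->
  forall sigma, 0 < sigma -> exists B, 0 <= B /\ forall u, Cnorm (phi u) <= B + exp (sigma * Cnorm u).
Proof.
  intros He Ho sigma Hs.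
  assert (Ht : type_zero_order_one phi)
    by (destruct Ho as [Ho | [_ Ht]]; [apply order_lt_one_type_zero|]; auto).
  destruct (Ht sigma Hs) as [R0 [HR0 Hg]].
  destruct (entire_bounded_on_disc phi R0 He (Rlt_le _ _ HR0)) as [B HB].
  exists (Rmax 0 B). split; [apply Rmax_l|].
  intros u. pose proof (exp_pos (sigma * Cnorm u)). pose proof (Rmax_l 0 B); pose proof (Rmax_r 0 B).
  destruct (Rle_dec R0 (Cnorm u)).
  - pose proof (Hg u r). lra.
  - pose proof (HB u ltac:(lra)). lra.
Qed.

(* Comparison of increments: if h' <= g' on [a, b] then
   h(b) - h(a) <= g(b) - g(a)  (mean value theorem applied to h - g). *)
Lemma increment_le_of_deriv_le (h g : R -> R) a b : a < b ->
  (forall s, a <= s <= b -> exists dh dg,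
     derivable_pt_lim h s dh /\ derivable_pt_lim g s dg /\ dh <= dg) ->
  h b - h a <= g b - g a.
Proof.
  intros Hab Hd.
  set (D := fun s => epsilon (inhabits 0) (fun d => derivable_pt_lim (h - g)%F s d)).
  assert (HD : forall s, a <= s <= b -> derivable_pt_lim (h - g)%F s (D s)).
  { intros s Hs. apply epsilon_spec. destruct (Hd s Hs) as [dh [dg [Hh [Hg _]]]].
    exists (dh - dg). apply derivable_pt_lim_minus; auto. }
  destruct (MVT_cor2 _ D a b Hab HD) as [s [Hmvt Hs]].
  assert (Hs' : a <= s <= b) by lra.
  destruct (Hd s Hs') as [dh [dg [Hh [Hg Hle]]]].
  rewrite (uniqueness_limite _ s _ _ (HD s Hs') (derivable_pt_lim_minus _ _ _ _ _ Hh Hg)) in Hmvt.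
  unfold minus_fct in Hmvt. nra.
Qed.

Definition log_ratio (r : R) : R := ln (1 + r) - ln (1 - r).

Lemma log_ratio_0 : log_ratio 0 = 0.
Proof. unfold log_ratio. rewrite Rplus_0_r, Rminus_0_r. ring. Qed.

Lemma log_ratio_ge0 r : 0 <= r < 1 -> 0 <= log_ratio r.
Proof. intros Hr. unfold log_ratio. pose proof (ln_le (1 - r) (1 + r)). lra. Qed.

Lemma log_ratio_le r : 0 <= r < 1 -> log_ratio r <= 2 * ln 2 - ln (1 - r ^ 2).
Proof.
  intros Hr. unfold log_ratio. replace (1 - r ^ 2) with ((1 - r) * (1 + r)) by ring.
  rewrite ln_mult by lra. pose proof (ln_le (1 + r) 2 ltac:(lra) ltac:(lra)). lra.
Qed.

Lemma affine_deriv a b s : derivable_pt_lim (fun x => a + x * b) s b.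
Proof.
  intros eps He. exists (mkposreal _ He). intros h Hh _.
  replace ((a + (s + h) * b - (a + s * b)) / h - b) with 0 by (field; auto).
  rewrite Rabs_R0; auto.
Qed.

Lemma log_ratio_deriv c r s : -1 < s * r < 1 ->
  derivable_pt_lim (fun s => c * log_ratio (s * r)) s (c * (2 * r / (1 - (s * r) ^ 2))).
Proof.
  intros Hsr.
  replace (c * (2 * r / (1 - (s * r) ^ 2)))
    with (c * (/ (1 + s * r) * r - / (1 + s * (- r)) * (- r))) by (field; nra).
  apply (derivable_pt_lim_ext (mult_real_fct c (fun s => ln (1 + s * r) - ln (1 + s * (- r)))));
    [intro x; unfold mult_real_fct, log_ratio; replace (1 + x * - r) with (1 - x * r) by ring; reflexivity|].
  apply derivable_pt_lim_scal.
  apply (derivable_pt_lim_minus (comp ln (fun x => 1 + x * r)) (comp ln (fun x => 1 + x * (- r)))).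
  - apply derivable_pt_lim_comp; [apply affine_deriv | apply derivable_pt_lim_ln; lra].
  - apply derivable_pt_lim_comp; [apply affine_deriv | apply derivable_pt_lim_ln; lra].
Qed.

Definition along (f : Cplx -> Cplx) (z v : Cplx) (s : R) : R := rdot v (f (s * fst z, s * snd z)).

Lemma along_deriv f z v s l : 0 < Cnorm z -> Rabs s * Cnorm z < 1 ->
  is_cderiv_on inD f (s * fst z, s * snd z) l ->
  derivable_pt_lim (along f z v) s (rdot v (Cmul l z)).
Proof.
  intros Hz Hs Hd eps He.
  set (r := Cnorm z) in *. pose proof (Cnorm_ge0 v) as Nv.
  destruct (small_factor (Cnorm v * r) (eps / 2)) as [e [He0 [_ Hle]]]; [nra|lra|].
  destruct (cderiv_remainder _ _ _ _ Hd e He0) as [d [Hd0 Hrem]].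
  assert (Hpos : 0 < Rmin (d / r) ((1 - Rabs s * r) / r))
    by (apply Rmin_pos; apply Rdiv_lt_0_compat; lra).
  exists (mkposreal _ Hpos). intros k Hk0 Hk. simpl in Hk.
  pose proof (Rabs_pos_lt k Hk0) as Nk.
  assert (Hkd : Rabs k * r < d).
  { assert (Rabs k < d / r) by (eapply Rlt_le_trans; [exact Hk|apply Rmin_l]).
    apply (Rmult_lt_compat_r r) in H; auto. replace (d / r * r) with d in H by (field; lra). lra. }
  assert (Hk1 : Rabs k * r < 1 - Rabs s * r).
  { assert (Rabs k < (1 - Rabs s * r) / r) by (eapply Rlt_le_trans; [exact Hk|apply Rmin_r]).
    apply (Rmult_lt_compat_r r) in H; auto.
    replace ((1 - Rabs s * r) / r * r) with (1 - Rabs s * r) in H by (field; lra). lra. }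
  set (hh := (k * fst z, k * snd z)).
  assert (Nhh : Cnorm hh = Rabs k * r) by apply Cnorm_scal.
  assert (Hadd : Cadd (s * fst z, s * snd z) hh = ((s + k) * fst z, (s + k) * snd z))
    by (unfold Cadd, hh; simpl; f_equal; ring).
  assert (HinD : inD (Cadd (s * fst z, s * snd z) hh)).
  { rewrite Hadd. unfold inD. rewrite Cnorm_scal. pose proof (Rabs_triang s k). fold r. nra. }
  specialize (Hrem hh ltac:(lra) HinD). rewrite Hadd, Nhh in Hrem.
  set (E := Csub (Csub (f ((s + k) * fst z, (s + k) * snd z)) (f (s * fst z, s * snd z))) (Cmul l hh)) in *.
  (* the difference quotient differs from the claimed derivative by <v, E>/k *)
  replace ((along f z v (s + k) - along f z v s) / k - rdot v (Cmul l z)) with (rdot v E / k)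
    by (unfold along, E, hh, rdot, Csub, Cmul; simpl; field; auto).
  unfold Rdiv. rewrite Rabs_mult, Rabs_inv.
  apply (Rmult_lt_reg_r (Rabs k)); auto.
  rewrite Rmult_assoc, Rinv_l, Rmult_1_r by lra.
  eapply Rle_lt_trans; [apply dot_abs_le|].
  assert (Cnorm v * Cnorm E <= Cnorm v * (e * (Rabs k * r))) by (apply Rmult_le_compat_l; auto).
  nra.
Qed.

Lemma inD_C0 : inD C0.
Proof. unfold inD; rewrite Cnorm_C0; lra. Qed.

Lemma bloch_value_at_0 f K : bloch_norm_le f K -> Cnorm (f C0) <= K.
Proof.
  intros [Han Hbd]. destruct (Han C0 inD_C0) as [l0 Hl0].
  specialize (Hbd C0 l0 inD_C0 Hl0). rewrite Cnorm_C0 in Hbd.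
  pose proof (Cnorm_ge0 l0). simpl in Hbd. nra.
Qed.

Lemma along_deriv_le f K z v s : bloch_norm_le f K -> 0 < Cnorm z < 1 -> 0 <= s <= 1 ->
  exists dh dg, derivable_pt_lim (along f z v) s dh /\
    derivable_pt_lim (fun s => Cnorm v * K / 2 * log_ratio (s * Cnorm z)) s dg /\ dh <= dg.
Proof.
  intros [Han Hbd] Hz Hs. set (r := Cnorm z) in *.
  assert (Hsr : 0 <= s * r <= r) by (split; [apply Rmult_le_pos | replace r with (1 * r) at 2 by ring; apply Rmult_le_compat_r]; lra).
  assert (Hsz : inD (s * fst z, s * snd z))
    by (unfold inD; rewrite Cnorm_scal, Rabs_right by lra; fold r; lra).
  destruct (Han _ Hsz) as [l Hl].
  exists (rdot v (Cmul l z)), (Cnorm v * K / 2 * (2 * r / (1 - (s * r) ^ 2))).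
  split; [apply along_deriv; fold r; [lra | rewrite Rabs_right by lra; lra | exact Hl]|].
  split; [apply log_ratio_deriv; lra|].
  specialize (Hbd _ l Hsz Hl). rewrite Cnorm_scal, Rabs_right in Hbd by lra. fold r in Hbd.
  pose proof (Cnorm_ge0 (f C0)); pose proof (Cnorm_ge0 l); pose proof (Cnorm_ge0 v).
  assert (Hq : 0 < 1 - (s * r) ^ 2) by nra.
  assert (Hlq : Cnorm l <= K / (1 - (s * r) ^ 2)).
  { apply (Rmult_le_reg_r (1 - (s * r) ^ 2)); auto.
    replace (K / (1 - (s * r) ^ 2) * (1 - (s * r) ^ 2)) with K by (field; lra).
    replace ((s * r) ^ 2) with (s ^ 2 * r ^ 2) by ring. nra. }
  apply Rle_trans with (Cnorm v * (Cnorm l * r)).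
  - pose proof (dot_abs_le v (Cmul l z)). rewrite Cnorm_mul in H2. fold r in H2.
    pose proof (Rle_abs (rdot v (Cmul l z))). lra.
  - replace (Cnorm v * K / 2 * (2 * r / (1 - (s * r) ^ 2))) with (Cnorm v * (K / (1 - (s * r) ^ 2) * r))
      by (field; lra).
    apply Rmult_le_compat_l; auto. apply Rmult_le_compat_r; lra.
Qed.

Lemma bloch_increment f K z : bloch_norm_le f K -> inD z ->
  Cnorm (Csub (f z) (f C0)) <= K / 2 * log_ratio (Cnorm z).
Proof.
  intros Hb Hz. unfold inD in Hz.
  pose proof (Cnorm_ge0 z) as Nz. pose proof (Cnorm_ge0 (f C0)).
  pose proof (bloch_value_at_0 f K Hb) as HK.
  pose proof (log_ratio_ge0 (Cnorm z) (conj Nz Hz)) as HL.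
  destruct (Req_dec (Cnorm z) 0) as [Ez|Ez].
  { rewrite Ez, log_ratio_0, (Cnorm_eq0 z Ez), Csub_self, Cnorm_C0. lra. }
  assert (Hz0 : 0 < Cnorm z) by (destruct Nz; [auto | congruence]).
  set (v := Csub (f z) (f C0)). pose proof (Cnorm_ge0 v) as Nv.
  pose proof (increment_le_of_deriv_le (along f z v)
    (fun s => Cnorm v * K / 2 * log_ratio (s * Cnorm z)) 0 1 Rlt_0_1
    (fun s Hs => along_deriv_le f K z v s Hb (conj Hz0 Hz) Hs)) as Hinc.
  unfold along in Hinc.
  replace (1 * fst z, 1 * snd z) with z in Hinc by (destruct z; simpl; f_equal; ring).
  replace (0 * fst z, 0 * snd z) with C0 in Hinc by (unfold C0; f_equal; ring).
  rewrite Rmult_0_l, Rmult_1_l, log_ratio_0 in Hinc.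
  (* the left-hand side is <v, f(z) - f(0)> = |v|^2 *)
  replace (rdot v (f z) - rdot v (f C0)) with (Cnorm v * Cnorm v) in Hinc
    by (rewrite Cnorm_sq; unfold v, rdot, Csub; simpl; ring).
  destruct Nv as [Nv|Nv]; [|rewrite <- Nv; nra].
  apply (Rmult_le_reg_l (Cnorm v)); auto. lra.
Qed.

Lemma rpow_pos x y : 0 < x -> rpow x y = Rpower x y.
Proof. intros; unfold rpow; destruct (Rlt_dec 0 x); [auto|lra]. Qed.

Lemma rpow_nonpos x y : x <= 0 -> rpow x y = 0.
Proof. intros; unfold rpow; destruct (Rlt_dec 0 x); [lra|auto]. Qed.

Lemma rpow_ge0 x y : 0 <= rpow x y.
Proof. unfold rpow; destruct (Rlt_dec 0 x); [left; apply exp_pos | lra]. Qed.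

Lemma phi_bloch_bound phi B sigma f K z :
  0 < sigma -> 0 <= B -> (forall u, Cnorm (phi u) <= B + exp (sigma * Cnorm u)) ->
  bloch_norm_le f K -> inD z ->
  Cnorm (phi (f z)) <=
    (B + exp (sigma * K * (1 + ln 2))) * exp (sigma * K / 2 * - ln (1 - Cnorm z ^ 2)).
Proof.
  intros Hs HB Hphi Hf Hz.
  pose proof (bloch_value_at_0 f K Hf) as HK0. pose proof (Cnorm_ge0 (f C0)).
  unfold inD in Hz. pose proof (Cnorm_ge0 z).
  assert (Hlnx : ln (1 - Cnorm z ^ 2) <= 0) by (rewrite <- ln_1; apply ln_le; nra).
  set (t := - ln (1 - Cnorm z ^ 2)) in *.
  assert (Ht : 0 <= t) by (unfold t; lra).
  assert (Hlr : log_ratio (Cnorm z) <= 2 * ln 2 + t)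
    by (unfold t; pose proof (log_ratio_le (Cnorm z) ltac:(lra)); lra).
  clearbody t.
  assert (Hfz : Cnorm (f z) <= K * (1 + ln 2) + K / 2 * t).
  { pose proof (bloch_increment f K z Hf Hz) as Hinc.
    assert (K / 2 * log_ratio (Cnorm z) <= K / 2 * (2 * ln 2 + t)) by (apply Rmult_le_compat_l; lra).
    rewrite <- (Cadd_Csub (f C0) (f z)).
    eapply Rle_trans; [apply Cnorm_add|]. nra. }
  assert (HsKt : 0 <= sigma * K / 2 * t) by (repeat apply Rmult_le_pos; lra).
  assert (Hexp1 : 1 <= exp (sigma * K / 2 * t)) by (rewrite <- exp_0; apply exp_le; lra).
  assert (exp (sigma * Cnorm (f z)) <= exp (sigma * K * (1 + ln 2)) * exp (sigma * K / 2 * t)).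
  { rewrite <- exp_plus. apply exp_le. nra. }
  eapply Rle_trans; [apply Hphi|]. nra.
Qed.

Lemma integrand_trade p a b g x W P A :
  0 < p -> 0 < x <= 1 -> 0 < A -> 0 <= W -> 0 <= P -> p * g <= a - b ->
  P <= A * exp (g * - ln x) ->
  rpow x a * rpow (W * P) p <= exp (p * ln A) * (rpow x b * rpow W p).
Proof.
  intros Hp Hx HA HW HP Hg HPA.
  pose proof (exp_pos (p * ln A)).
  destruct (Rle_lt_dec (W * P) 0) as [H0|H0].
  { rewrite (rpow_nonpos _ p H0), Rmult_0_r.
    apply Rmult_le_pos; [lra | apply Rmult_le_pos; apply rpow_ge0]. }
  assert (HW0 : 0 < W) by (destruct HW; [auto | subst; lra]).
  assert (HP0 : 0 < P) by (destruct HP; [auto | subst; lra]).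
  rewrite !rpow_pos by lra. unfold Rpower. rewrite ln_mult by auto. rewrite <- !exp_plus.
  apply exp_le.
  assert (Hlnx : ln x <= 0) by (rewrite <- ln_1; apply ln_le; lra).
  assert (ln P <= ln A + g * - ln x).
  { rewrite <- (ln_exp (g * - ln x)), <- ln_mult by (auto; apply exp_pos). apply ln_le; auto. }
  assert (p * ln P <= p * (ln A + g * - ln x)) by (apply Rmult_le_compat_l; lra).
  nra.
Qed.

Lemma integrand_domination p alpha beta B sigma K w phi f z :
  0 < p -> 0 < sigma -> 0 <= B -> p * (sigma * K / 2) <= alpha - beta ->
  (forall u, Cnorm (phi u) <= B + exp (sigma * Cnorm u)) ->
  bloch_norm_le f K -> inD z ->
  bergman_integrand p alpha (S_op phi w f) z <=
  exp (p * ln (B + exp (sigma * K * (1 + ln 2)))) * bergman_integrand p beta w z.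
Proof.
  intros Hp Hs HB Hab Hphi Hf Hz.
  pose proof (phi_bloch_bound phi B sigma f K z Hs HB Hphi Hf Hz) as Hbd.
  unfold inD in Hz. pose proof (Cnorm_ge0 z).
  unfold bergman_integrand, S_op. rewrite Cnorm_mul.
  apply (integrand_trade p alpha beta (sigma * K / 2)); auto; try nra.
  - pose proof (exp_pos (sigma * K * (1 + ln 2))). lra.
  - apply Cnorm_ge0.
  - apply Cnorm_ge0.
Qed.

Lemma continuity_pt_eps f x : continuity_pt f x ->
  forall eps, 0 < eps -> exists delta, 0 < delta /\ forall y, Rabs (y - x) < delta -> Rabs (f y - f x) < eps.
Proof.
  intros H eps He. destruct (H eps He) as [d [Hd H']]. exists d; split; auto.
  intros y Hy. destruct (Req_dec y x) as [->|E].
  - rewrite Rminus_diag, Rabs_R0; auto.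
  - apply (H' y). split; [split; [exact I | auto] | auto].
Qed.

Lemma eps_continuity_pt f x :
  (forall eps, 0 < eps -> exists delta, 0 < delta /\ forall y, Rabs (y - x) < delta -> Rabs (f y - f x) < eps) ->
  continuity_pt f x.
Proof.
  intros H eps He. destruct (H eps He) as [d [Hd H']]. exists d; split; auto.
  intros y [_ Hy]. apply H'. auto.
Qed.

Definition rcont (F : Cplx -> R) (z0 : Cplx) : Prop :=
  forall eps, 0 < eps -> exists delta, 0 < delta /\
    forall u, Cnorm (Csub u z0) < delta -> Rabs (F u - F z0) < eps.

Lemma rcont_comp F h z0 : rcont F z0 -> continuity_pt h (F z0) -> rcont (fun u => h (F u)) z0.
Proof.
  intros HF Hh eps He. destruct (continuity_pt_eps _ _ Hh eps He) as [d1 [Hd1 H1]].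
  destruct (HF d1 Hd1) as [d2 [Hd2 H2]]. exists d2; split; auto.
Qed.

Lemma rcont_mul F G z0 : rcont F z0 -> rcont G z0 -> rcont (fun u => F u * G u) z0.
Proof.
  intros HF HG eps He.
  set (a := Rabs (F z0)); set (b := Rabs (G z0)).
  assert (0 <= a) by apply Rabs_pos; assert (0 <= b) by apply Rabs_pos.
  destruct (small_factor (a + b + 1) eps) as [e [He0 [He1 Hle]]]; [lra | auto |].
  destruct (HF e He0) as [d1 [Hd1 H1]]; destruct (HG e He0) as [d2 [Hd2 H2]].
  exists (Rmin d1 d2); split; [apply Rmin_pos; auto|].
  intros u Hu.
  specialize (H1 u (Rlt_le_trans _ _ _ Hu (Rmin_l _ _))).
  specialize (H2 u (Rlt_le_trans _ _ _ Hu (Rmin_r _ _))).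
  replace (F u * G u - F z0 * G z0)
    with ((F u - F z0) * G z0 + F z0 * (G u - G z0) + (F u - F z0) * (G u - G z0)) by ring.
  eapply Rle_lt_trans; [apply Rabs_triang|].
  eapply Rle_lt_trans; [apply Rplus_le_compat_r, Rabs_triang|].
  rewrite !Rabs_mult. fold a b.
  pose proof (Rabs_pos (F u - F z0)); pose proof (Rabs_pos (G u - G z0)).
  assert (Rabs (F u - F z0) * b <= e * b) by (apply Rmult_le_compat_r; lra).
  assert (a * Rabs (G u - G z0) <= a * e) by (apply Rmult_le_compat_l; lra).
  assert (Rabs (F u - F z0) * Rabs (G u - G z0) < e * 1) by (apply Rmult_le_0_lt_compat; lra).
  nra.
Qed.

Lemma rcont_Cnorm z0 : rcont Cnorm z0.
Proof.
  intros eps He. exists eps; split; auto. intros u Hu.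
  eapply Rle_lt_trans; [apply Cnorm_rev_tri | auto].
Qed.

Lemma rcont_norm_cderiv w z0 l : inD z0 -> is_cderiv_on inD w z0 l -> rcont (fun u => Cnorm (w u)) z0.
Proof.
  intros Hz Hw eps He. destruct (cderiv_continuous _ _ _ _ Hw eps He) as [d [Hd H]].
  unfold inD in Hz.
  exists (Rmin d (1 - Cnorm z0)); split; [apply Rmin_pos; lra|].
  intros u Hu. eapply Rle_lt_trans; [apply Cnorm_rev_tri|]. apply H.
  - assert (Cnorm (Csub u z0) < 1 - Cnorm z0) by (eapply Rlt_le_trans; [exact Hu|apply Rmin_r]).
    unfold inD. rewrite <- (Cadd_Csub z0 u).
    eapply Rle_lt_trans; [apply Cnorm_add|]. lra.
  - eapply Rlt_le_trans; [exact Hu|apply Rmin_l].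
Qed.

Lemma rpow_continuous_pos x0 y : 0 < x0 -> continuity_pt (fun x => rpow x y) x0.
Proof.
  intros Hx. apply (continuity_pt_locally_ext (fun x => Rpower x y) _ x0); auto.
  - intros z Hz. unfold Rdist in Hz. apply Rabs_def2 in Hz. rewrite rpow_pos; auto. lra.
  - apply derivable_continuous_pt. exists (y * Rpower x0 (y - 1)). apply derivable_pt_lim_power; auto.
Qed.

Lemma rpow_continuous_0 y : 0 < y -> continuity_pt (fun x => rpow x y) 0.
Proof.
  intros Hy. apply eps_continuity_pt. intros eps He. exists (Rpower eps (/ y)). split; [apply exp_pos|].
  intros z Hz. rewrite (rpow_nonpos 0), Rminus_0_r by lra. rewrite Rminus_0_r in Hz.
  destruct (Rle_dec z 0) as [Hz0|Hz0]; [rewrite rpow_nonpos, Rabs_R0; auto|].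
  rewrite rpow_pos, Rabs_right by (try apply Rle_ge; try left; try apply exp_pos; lra).
  rewrite Rabs_right in Hz by lra.
  replace eps with (Rpower (Rpower eps (/ y)) y) by (rewrite Rpower_mult, Rinv_l, Rpower_1; lra).
  apply Rlt_Rpower_l; lra.
Qed.

Lemma bergman_integrand_rcont p gamma w z : 0 < p -> analytic_D w -> inD z ->
  rcont (bergman_integrand p gamma w) z.
Proof.
  intros Hp Hw Hz. unfold bergman_integrand.
  apply (rcont_mul (fun u => rpow (1 - Cnorm u ^ 2) gamma) (fun u => rpow (Cnorm (w u)) p)).
  - apply (rcont_comp (fun u => 1 - Cnorm u ^ 2) (fun x => rpow x gamma)).
    + apply (rcont_comp Cnorm (fun x => 1 - x ^ 2)); [apply rcont_Cnorm | reg].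
    + apply rpow_continuous_pos. unfold inD in Hz. pose proof (Cnorm_ge0 z). nra.
  - apply (rcont_comp (fun u => Cnorm (w u)) (fun x => rpow x p)).
    + destruct (Hw z Hz) as [l Hl]. eapply rcont_norm_cderiv; eauto.
    + destruct (Cnorm_ge0 (w z)) as [Hpos|Hzero].
      * apply rpow_continuous_pos; auto.
      * rewrite <- Hzero. apply rpow_continuous_0; auto.
Qed.

Lemma mul_close r r0 c c0 k : Rabs c <= 1 -> Rabs (c - c0) < k ->
  Rabs (r * c - r0 * c0) <= Rabs (r - r0) + Rabs r0 * k.
Proof.
  intros Hc Hcc.
  replace (r * c - r0 * c0) with ((r - r0) * c + r0 * (c - c0)) by ring.
  eapply Rle_trans; [apply Rabs_triang|]. rewrite !Rabs_mult.
  pose proof (Rabs_pos (r - r0)); pose proof (Rabs_pos r0).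
  assert (Rabs r0 * Rabs (c - c0) <= Rabs r0 * k) by (apply Rmult_le_compat_l; lra).
  nra.
Qed.

Lemma polar_jcont F r0 t0 : rcont F (r0 * cos t0, r0 * sin t0) ->
  jcont (fun r t => F (r * cos t, r * sin t)) r0 t0.
Proof.
  intros HF eps He. destruct (HF eps He) as [dF [HdF H]].
  destruct (small_factor (Rabs r0) (dF / 4)) as [k [Hk [_ Hr0k]]]; [apply Rabs_pos | lra |].
  destruct (continuity_pt_eps _ _ (continuity_cos t0) k Hk) as [dc [Hdc Hc]].
  destruct (continuity_pt_eps _ _ (continuity_sin t0) k Hk) as [ds [Hds Hs]].
  exists (Rmin (dF / 4) (Rmin dc ds)). split; [repeat apply Rmin_pos; auto; lra|].
  intros r t Hr Ht. apply H.
  pose proof (Rmin_l (dF / 4) (Rmin dc ds)); pose proof (Rmin_r (dF / 4) (Rmin dc ds));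
    pose proof (Rmin_l dc ds); pose proof (Rmin_r dc ds).
  pose proof (mul_close r r0 (cos t) (cos t0) k ltac:(apply Rabs_le, COS_bound) (Hc t ltac:(lra))).
  pose proof (mul_close r r0 (sin t) (sin t0) k ltac:(apply Rabs_le, SIN_bound) (Hs t ltac:(lra))).
  eapply Rle_lt_trans; [apply Cnorm_le_sum|]. simpl. lra.
Qed.

Lemma RInt_eq f a b (pr : Riemann_integrable f a b) : RInt f a b = RiemannInt pr.
Proof.
  unfold RInt. destruct (excluded_middle_informative _) as [H|H].
  - apply RiemannInt_P5.
  - exfalso; apply H; constructor; exact pr.
Qed.

Lemma RInt_nonneg g a b : a <= b -> Riemann_integrable g a b ->
  (forall x, a < x < b -> 0 <= g x) -> 0 <= RInt g a b.
Proof.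
  intros Hab pr H. rewrite (RInt_eq _ _ _ pr).
  pose proof (RiemannInt_P19 (RiemannInt_P14 a b 0) pr Hab H) as H0.
  rewrite RiemannInt_P15 in H0. lra.
Qed.

(* Monotonicity of RInt against a multiple of a nonnegative integrable function;
   f need not be integrable, since RInt is then 0. *)
Lemma RInt_le_scal f g a b c : a <= b -> 0 <= c -> Riemann_integrable g a b ->
  (forall x, a < x < b -> f x <= c * g x) -> (forall x, a < x < b -> 0 <= g x) ->
  RInt f a b <= c * RInt g a b.
Proof.
  intros Hab Hc prg Hfg Hg.
  pose proof (RInt_nonneg g a b Hab prg Hg).
  destruct (classic (inhabited (Riemann_integrable f a b))) as [[prf]|Hn].
  - rewrite (RInt_eq _ _ _ prf), (RInt_eq _ _ _ prg).
    set (prcg := RiemannInt_P10 c (RiemannInt_P14 a b 0) prg).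
    pose proof (RiemannInt_P13 (RiemannInt_P14 a b 0) prg prcg) as E.
    rewrite RiemannInt_P15 in E.
    pose proof (RiemannInt_P19 prf prcg Hab) as Hle.
    assert (RiemannInt prf <= RiemannInt prcg)
      by (apply Hle; intros x Hx; unfold fct_cte; rewrite Rplus_0_l; auto).
    lra.
  - assert (RInt f a b = 0)
      by (unfold RInt; destruct (excluded_middle_informative _); [contradiction | auto]).
    nra.
Qed.

Lemma RInt_close f g a b e : a <= b -> Riemann_integrable f a b -> Riemann_integrable g a b ->
  (forall x, a < x < b -> Rabs (f x - g x) <= e) -> Rabs (RInt f a b - RInt g a b) <= e * (b - a).
Proof.
  intros Hab prf prg Hfg.
  rewrite (RInt_eq _ _ _ prf), (RInt_eq _ _ _ prg).
  set (prd := RiemannInt_P10 (-1) prf prg).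
  pose proof (RiemannInt_P13 prf prg prd) as E.
  destruct (@RiemannInt_const_bound _ a b (- e) e prd Hab) as [B1 B2].
  { intros x Hx. specialize (Hfg x Hx). apply Rabs_le_le in Hfg. lra. }
  apply Rabs_le. lra.
Qed.

Definition circle_int (F : Cplx -> R) (r : R) : R := RInt (fun t => F (r * cos t, r * sin t)) 0 (2 * PI).

Lemma two_PI_ge0 : 0 <= 2 * PI.
Proof. pose proof PI_RGT_0; lra. Qed.

Lemma polar_inD r t : Rabs r < 1 -> inD (r * cos t, r * sin t).
Proof. unfold inD; rewrite Cnorm_polar; auto. Qed.

Section CircleIntegrals.

Variable F : Cplx -> R.
Hypothesis F_cont : forall z, inD z -> rcont F z.

Lemma circle_integrable r : Rabs r < 1 ->
  Riemann_integrable (fun t => F (r * cos t, r * sin t)) 0 (2 * PI).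
Proof.
  intros Hr. apply continuity_implies_RiemannInt; [apply two_PI_ge0|].
  intros t _. apply (jcont_section (fun r t => F (r * cos t, r * sin t))).
  apply polar_jcont, F_cont, polar_inD; auto.
Qed.

Lemma circle_int_continuous r0 : Rabs r0 < 1 -> continuity_pt (circle_int F) r0.
Proof.
  intros Hr0. apply eps_continuity_pt. intros eps He.
  pose proof PI_RGT_0.
  destruct (small_factor (2 * PI) (eps / 2)) as [e [He0 [_ Hle]]]; [lra | lra |].
  destruct (tube (fun r t => F (r * cos t, r * sin t)) r0 0 (2 * PI) two_PI_ge0) with (eps := e)
    as [d [Hd Htube]]; auto.
  { intros t _. apply polar_jcont, F_cont, polar_inD; auto. }
  exists (Rmin d (1 - Rabs r0)). split; [apply Rmin_pos; lra|].
  intros r Hr.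
  assert (Hr1 : Rabs (r - r0) < d) by (eapply Rlt_le_trans; [exact Hr|apply Rmin_l]).
  assert (Hr2 : Rabs r < 1).
  { assert (Rabs (r - r0) < 1 - Rabs r0) by (eapply Rlt_le_trans; [exact Hr|apply Rmin_r]).
    replace r with ((r - r0) + r0) by ring. eapply Rle_lt_trans; [apply Rabs_triang|]. lra. }
  eapply Rle_lt_trans.
  - apply (RInt_close _ _ _ _ e two_PI_ge0 (circle_integrable r Hr2) (circle_integrable r0 Hr0)).
    intros t Ht. left. apply Htube; auto. lra.
  - lra.
Qed.

Lemma radial_integrable rho : 0 <= rho < 1 ->
  Riemann_integrable (fun r => r * circle_int F r) 0 rho.
Proof.
  intros Hrho. apply continuity_implies_RiemannInt; [lra|].
  intros x Hx. apply continuity_pt_mult.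
  - apply derivable_continuous_pt, derivable_pt_id.
  - apply circle_int_continuous. rewrite Rabs_right; lra.
Qed.

Hypothesis F_nonneg : forall z, inD z -> 0 <= F z.

Lemma circle_int_nonneg r : Rabs r < 1 -> 0 <= circle_int F r.
Proof.
  intros Hr. apply RInt_nonneg; [apply two_PI_ge0 | apply circle_integrable; auto |].
  intros; apply F_nonneg, polar_inD; auto.
Qed.

Lemma disc_int_le_scal G c rho : 0 <= c -> 0 <= rho < 1 ->
  (forall z, inD z -> G z <= c * F z) -> disc_int G rho <= c * disc_int F rho.
Proof.
  intros Hc Hrho HGF. unfold disc_int.
  replace (c * (/ PI * RInt (fun r => r * RInt (fun t => F (r * cos t, r * sin t)) 0 (2 * PI)) 0 rho))
    with (/ PI * (c * RInt (fun r => r * circle_int F r) 0 rho)) by (unfold circle_int; ring).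
  apply Rmult_le_compat_l; [left; apply Rinv_0_lt_compat, PI_RGT_0|].
  apply RInt_le_scal; [lra | auto | apply radial_integrable; auto | |].
  - intros x Hx. assert (Hx1 : Rabs x < 1) by (rewrite Rabs_right; lra).
    assert (circle_int G x <= c * circle_int F x).
    { apply RInt_le_scal; [apply two_PI_ge0 | auto | apply circle_integrable; auto | |];
        intros t _; [apply HGF | apply F_nonneg]; apply polar_inD; auto. }
    replace (c * (x * circle_int F x)) with (x * (c * circle_int F x)) by ring.
    apply Rmult_le_compat_l; [lra | auto].
  - intros x Hx. apply Rmult_le_pos; [lra | apply circle_int_nonneg; rewrite Rabs_right; lra].
Qed.

End CircleIntegrals.

Lemma S_op_analytic phi w f : entire phi -> analytic_D w -> analytic_D f -> analytic_D (S_op phi w f).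
Proof.
  intros Hphi Hw Hf z Hz.
  destruct (Hw z Hz) as [lw Hlw]; destruct (Hf z Hz) as [lf Hlf]; destruct (Hphi (f z)) as [lphi Hlphi].
  eexists. apply (product_rule inD w (fun u => phi (f u))); eauto.
  apply chain_rule; eauto.
Qed.

Lemma bloch_norm_le_mono f K K' : bloch_norm_le f K -> K <= K' -> bloch_norm_le f K'.
Proof. intros [Ha Hb] HK. split; auto. intros z l Hz Hl. specialize (Hb z l Hz Hl). lra. Qed.

(* The uniform estimate: choosing sigma = (alpha - beta) / (p K) in the growth
   bound of phi, the A^p_alpha integrals of S_{phi,w}(f), ||f||_B <= K, are
   dominated by a fixed multiple of the A^p_beta integral of w. *)
Lemma S_op_uniform_bound p alpha beta w phi M K :
  0 < p -> beta < alpha -> 0 < K -> analytic_D w -> bergman_int_le p beta w M ->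
  entire phi -> (order_lt_one phi \/ (order_eq_one phi /\ type_zero_order_one phi)) ->
  exists CK, forall f, bloch_norm_le f K -> bergman_int_le p alpha (S_op phi w f) CK.
Proof.
  intros Hp Hab HK Hw HM Hphi Hord.
  set (sigma := (alpha - beta) / (p * K)).
  assert (Hs : 0 < sigma) by (apply Rdiv_lt_0_compat; nra).
  assert (Hsigma : p * (sigma * K / 2) <= alpha - beta) by (unfold sigma; field_simplify; lra).
  destruct (entire_exp_type_bound phi Hphi Hord sigma Hs) as [B [HB Hgrowth]].
  set (C := exp (p * ln (B + exp (sigma * K * (1 + ln 2))))).
  exists (C * M). intros f Hf rho Hrho.
  assert (HC : 0 <= C) by (left; apply exp_pos).
  apply Rle_trans with (C * disc_int (bergman_integrand p beta w) rho).
  - apply disc_int_le_scal; auto.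
    + intros z Hz. apply bergman_integrand_rcont; auto.
    + intros z _. apply Rmult_le_pos; apply rpow_ge0.
    + intros z Hz. apply integrand_domination; auto.
  - apply Rmult_le_compat_l; auto.
Qed.

Theorem theorem2 (p alpha beta : R) (w phi : Cplx -> Cplx) :
  0 < p -> -1 < alpha -> -1 < beta -> beta < alpha ->
  in_Apg p beta w ->
  entire phi ->
  (order_lt_one phi \/ (order_eq_one phi /\ type_zero_order_one phi)) ->
  (forall f, in_Bloch f -> in_Apg p alpha (S_op phi w f)) /\
  (forall K, 0 < K -> exists CK, forall f, bloch_norm_le f K ->
      bergman_int_le p alpha (S_op phi w f) CK).
Proof.
  intros Hp _ _ Hab [Hw [M HM]] Hphi Hord.
  assert (Hbounded : forall K, 0 < K -> exists CK, forall f, bloch_norm_le f K ->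
      bergman_int_le p alpha (S_op phi w f) CK)
    by (intros K HK; eapply S_op_uniform_bound; eauto).
  split; [|exact Hbounded].
  (* a Bloch function lies in some ball of radius K' = max K 1 > 0 *)
  intros f [K HK]. split; [apply S_op_analytic; auto; apply HK|].
  destruct (Hbounded (Rmax K 1)) as [CK HCK]; [pose proof (Rmax_r K 1); lra|].
  exists CK. apply HCK, (bloch_norm_le_mono f K); auto. apply Rmax_l.
Qed.
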